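(* Let $X=\{x_1,\dots,x_n\}$ be a set of Boolean variables and $\mathcal{C}=\{C_1,\dots,C_m\}$ a set of clauses, each consisting of exactly three positive literals. The graph $G'$ constructed from $(\mathcal{C},X)$ as described in the context is $(P_3+P_5)$-free.
   Context: First construct $(G,L)$: for each $x_i\in X$ introduce two adjacent vertices $x_i$ and $\overline{x}_i$ with $L(x_i)=L(\overline{x}_i)=\{4,5\}$. For each clause $C_j$ introduce two vertices $C_j,C_j'$ with $L(C_j)=L(C_j')=\{1,2,3\}$. Add an edge between every vertex of the form $x_i$ or $\overline{x}_i$ and every vertex of the form $C_j$ or $C_j'$. For each clause $C_j$, fix an order of its literals, say $C_j=\{x_g,x_h,x_i\}$, and add six new vertices $a_{g,j},a_{h,j},a_{i,j},a'_{g,j},a'_{h,j},a'_{i,j}$ with edges $x_ga_{g,j}$, $a_{g,j}C_j$, $x_ha_{h,j}$, $a_{h,j}C_j$, $x_ia_{i,j}$, $a_{i,j}C_j$, $\overline{x}_ga'_{g,j}$, $a'_{g,j}C_j'$, $\overline{x}_ha'_{h,j}$, $a'_{h,j}C_j'$, $\overline{x}_ia'_{i,j}$, $a'_{i,j}C_j'$, and lists $L(a_{g,j})=L(a'_{g,j})=\{1,4\}$, $L(a_{h,j})=L(a'_{h,j})=\{2,4\}$, $L(a_{i,j})=L(a'_{i,j})=\{3,4\}$. Then $G'$ is obtained from $G$ by adding a clique on five new vertices $k_1,\dots,k_5$ and adding an edge between $k_\ell$ and a vertex $u\in V(G)$ if and only if $\ell\notin L(u)$. $P_n$ denotes the path on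 $n$ vertices, $P_3+P_5$ the disjoint union of $P_3$ and $P_5$, and a graph is $H$-free if it has no induced subgraph isomorphic to $H$. *)

From mathcomp Require Import all_boot.
Set Implicit Arguments. Unset Strict Implicit. Unset Printing Implicit Defensive.

(* Vertex type of G' for n variables and m clauses:
   inl (inl (inl (i, b)))  : x_i (b = false) or \overline{x}_i (b = true), i : 'I_n
   inl (inl (inr (j, b)))  : C_j (b = false) or C_j' (b = true),            j : 'I_m
   inl (inr (k, j, b))     : a_{g,j} (b = false) or a'_{g,j} (b = true), where g is
                             the k-th literal (k : 'I_3, in the fixed order) of C_j
   inr l                   : k_{l+1},  l : 'I_5 *)
Definition vert (n m : nat) : finType :=
  (('I_n * bool + 'I_m * bool) + 'I_3 * 'I_m * bool + 'I_5)%type.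

(* Lists L(u) (colours 1..5) for vertices of G; the k-vertices are not in G. *)
Definition lst (n m : nat) (v : vert n m) : seq nat :=
  match v with
  | inl (inl (inl _)) => [:: 4; 5]
  | inl (inl (inr _)) => [:: 1; 2; 3]
  | inl (inr (k, _, _)) => [:: (nat_of_ord k).+1; 4]
  | inr _ => [::]
  end.

(* Oriented edges of G; clause j is (cl j 0, cl j 1, cl j 2) = (x_g, x_h, x_i). *)
Definition edgeG (n m : nat) (cl : 'I_m -> 'I_3 -> 'I_n) (u v : vert n m) : bool :=
  match u, v with
  | inl (inl (inl (i, b))), inl (inl (inl (i', b'))) => (i == i') && (b != b')
  | inl (inl (inl _)), inl (inl (inr _)) => true
  | inl (inl (inl (i, b))), inl (inr (k, j, b')) => (b == b') && (cl j k == i)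
  | inl (inl (inr (j, b))), inl (inr (k, j', b')) => (j == j') && (b == b')
  | _, _ => false
  end.

Definition adjG' (n m : nat) (cl : 'I_m -> 'I_3 -> 'I_n) (u v : vert n m) : bool :=
  match u, v with
  | inr l, inr l' => l != l'
  | inr l, w => (nat_of_ord l).+1 \notin lst w
  | w, inr l => (nat_of_ord l).+1 \notin lst w
  | _, _ => edgeG cl u v || edgeG cl v u
  end.

(* The graph P_3 + P_5 on 'I_8: paths 0-1-2 and 3-4-5-6-7. *)
Definition P3P5 (i j : 'I_8) : bool :=
  [|| (i.+1 == j) | (j.+1 == i)] && ~~ ((i == 2 :> nat) && (j == 3 :> nat) ||
                                        (i == 3 :> nat) && (j == 2 :> nat)).

Definition induced_free (T : finType) (adj : rel T) (k : nat) (H : rel 'I_k) : Prop :=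
  ~ exists f : 'I_k -> T, injective f /\ forall i j, adj (f i) (f j) = H i j.

From HB Require Import structures.
From mathcomp Require Import all_boot.
Set Implicit Arguments. Unset Strict Implicit. Unset Printing Implicit Defensive.

(* The literal vertices x_i, x̄_i are complete to the clause vertices C_j, C_j',
   and every vertex that is not an a-vertex sees a given literal or a given
   clause vertex; as the a-vertices are independent, an induced P_3 + P_5
   cannot use both literal and clause vertices.  Without clause vertices, G is
   a matching x_i x̄_i with pendant a-vertices; without literal vertices, it is
   a union of stars centred at clause vertices.  Neither contains three
   consecutive centres of a P_5, so the copy meets the clique k_1..k_5, which
   lies in one of its two components.  The other component contains a cherry of
   G (a clause vertex with two a-leaves, or a literal with an a-leaf), and each
   of k_1, k_2, k_3, k_5 sees a vertex of such a cherry.  The vertex k_4 sees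
   only clause and clique vertices, so when the copy has no clause vertex its
   neighbour in the copy is another clique vertex, which can be used instead. *)

Inductive vkind := Literal | Clause | Link | Clique.
Scheme Equality for vkind.
HB.instance Definition _ := comparableMixin vkind_eq_dec.

Section Graph.
Variables (n m : nat) (cl : 'I_m -> 'I_3 -> 'I_n).
Local Notation V := (vert n m).
Local Notation adj := (adjG' cl).

Definition kind (v : V) : vkind :=
  match v with
  | inl (inl (inl _)) => Literal
  | inl (inl (inr _)) => Clause
  | inl (inr _) => Link
  | inr _ => Clique
  end.

Lemma adj_lit_clause u v : kind u = Literal -> kind v = Clause -> adj u v.
Proof.
by case: u => [[[[i b]|[j b]]|[[k j] b]]|l];
  case: v => [[[[i' b']|[j' b']]|[[k' j'] b']]|l'].
Qed.

Lemma adj_clause_clause u v : kind u = Clause -> kind v = Clause -> adj u v = false.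
Proof.
by case: u => [[[[i b]|[j b]]|[[k j] b]]|l];
  case: v => [[[[i' b']|[j' b']]|[[k' j'] b']]|l'].
Qed.

Lemma adj_link_link u v : kind u = Link -> kind v = Link -> adj u v = false.
Proof.
by case: u => [[[[i b]|[j b]]|[[k j] b]]|l];
  case: v => [[[[i' b']|[j' b']]|[[k' j'] b']]|l'].
Qed.

Lemma lit_neighbour_lit_uniq u v w :
  kind u = Literal -> kind v = Literal -> kind w = Literal -> adj u v -> adj u w -> v = w.
Proof.
case: u => [[[[i b]|[j b]]|[[k j] b]]|l] //; case: v => [[[[i' b']|[j' b']]|[[k' j'] b']]|l'] //;
case: w => [[[[i'' b'']|[j'' b'']]|[[k'' j''] b'']]|l''] //= _ _ _.
rewrite !(eq_sym i) !(eq_sym b) !orbb => /andP [/eqP <- /negPf nb'] /andP [/eqP <- /negPf nb''].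
by case: b b' b'' nb' nb'' => [] [] [].
Qed.

Lemma link_neighbour_uniq a v w : kind a = Link -> kind v \in [:: Literal; Clause] ->
  kind w = kind v -> adj a v -> adj a w -> v = w.
Proof.
case: a => [[[[i b]|[j b]]|[[k j] b]]|l] //; case: v => [[[[i' b']|[j' b']]|[[k' j'] b']]|l'] //;
case: w => [[[[i'' b'']|[j'' b'']]|[[k'' j''] b'']]|l''] //= _ _ _; rewrite ?orbF.
- by case/andP=> /eqP <- /eqP -> /andP [/eqP <- /eqP ->].
- by case/andP=> /eqP -> /eqP -> /andP [/eqP -> /eqP ->].
Qed.

Lemma nonadj_lit_clause_link u v w : kind u = Literal -> kind v = Clause ->
  adj w u = false -> adj w v = false -> kind w = Link.
Proof.
case: u => [[[[i b]|[j b]]|[[k j] b]]|l] //; case: v => [[[[i' b']|[j' b']]|[[k' j'] b']]|l'] //.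
by case: w => [[[[? ?]|[? ?]]|?]|[[|[|[|[|[|?]]]]] ?]] //=; rewrite orbT.
Qed.

Lemma adj_clique_lit (l : 'I_5) v : l < 3 -> kind v = Literal -> adj (inr l) v.
Proof. by case: v => [[[[i b]|[j b]]|[[k j] b]]|l'] //; case: l => [[|[|[|?]]] ?]. Qed.

Lemma adj_clique_clause (l : 'I_5) v : 3 <= l -> kind v = Clause -> adj (inr l) v.
Proof. by case: v => [[[[i b]|[j b]]|[[k j] b]]|l'] //; case: l => [[|[|[|[|[|?]]]]] ?]. Qed.

Lemma adj_clique_link (l : 'I_5) v : l = 4 :> nat -> kind v = Link -> adj (inr l) v.
Proof. by case: v => [[[[i b]|[j b]]|[[[[|[|[|?]]] ?] j] b]]|l'] //= ->. Qed.

Lemma clique3_neighbour (l : 'I_5) v : l = 3 :> nat -> adj (inr l) v ->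
  kind v \in [:: Clause; Clique].
Proof. by case: v => [[[[i b]|[j b]]|[[k j] b]]|l'] //= ->; rewrite !inE ?orbT. Qed.

Lemma clause_link_nonadj_clique_uniq (l : 'I_5) c a1 a2 :
  kind c = Clause -> kind a1 = Link -> kind a2 = Link -> adj c a1 -> adj c a2 -> l < 3 ->
  adj (inr l) a1 = false -> adj (inr l) a2 = false -> a1 = a2.
Proof.
case: c => [[[[i b]|[j b]]|[[k j] b]]|l0] //;
case: a1 => [[[[i' b']|[j' b']]|[[k' j'] b']]|l'] //;
case: a2 => [[[[i'' b'']|[j'' b'']]|[[k'' j''] b'']]|l''] //= _ _ _; rewrite !orbF.
case/andP=> /eqP <- /eqP <- /andP [/eqP <- /eqP <-] lt3.
have index_of_missed k : (l.+1 \notin [:: k.+1; 4]) = false -> l = k :> nat.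
  by move/negbFE; rewrite !inE => /orP [/eqP [] | /eqP [el]] //; rewrite el in lt3.
move=> /index_of_missed e1 /index_of_missed e2.
by congr (inl (inr (_, _, _))); apply: val_inj; rewrite /= -e1 -e2.
Qed.

Lemma adj_clique_clique u v : kind u = Clique -> kind v = Clique -> adj u v = (u != v).
Proof.
by case: u => [[[[i b]|[j b]]|[[k j] b]]|l] //;
  case: v => [[[[i' b']|[j' b']]|[[k' j'] b']]|l'].
Qed.

Lemma cherry_no_clause u0 u1 u2 :
  kind u0 \in [:: Literal; Link] -> kind u1 \in [:: Literal; Link] ->
  kind u2 \in [:: Literal; Link] -> adj u0 u1 -> adj u0 u2 -> u1 != u2 ->
  kind u0 = Literal /\ (kind u1 = Link \/ kind u2 = Link).
Proof.
rewrite !inE => /orP [] /eqP k0 k1 k2 a01 a02 u12.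
- split=> //; case/orP: k1 => /eqP k1; last by left.
  case/orP: k2 => /eqP k2; last by right.
  by rewrite (lit_neighbour_lit_uniq k0 k1 k2 a01 a02) eqxx in u12.
- have lit u : (kind u == Literal) || (kind u == Link) -> adj u0 u -> kind u = Literal.
    by case/orP=> /eqP // ku; rewrite adj_link_link.
  have l1 := lit _ k1 a01; have l2 := lit _ k2 a02.
  by rewrite (link_neighbour_uniq k0 _ _ a01 a02) ?l1 ?l2 ?eqxx in u12.
Qed.

Lemma cherry_no_literal u0 u1 u2 :
  kind u0 \in [:: Clause; Link] -> kind u1 \in [:: Clause; Link] ->
  kind u2 \in [:: Clause; Link] -> adj u0 u1 -> adj u0 u2 -> u1 != u2 ->
  [/\ kind u0 = Clause, kind u1 = Link & kind u2 = Link].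
Proof.
rewrite !inE => /orP [] /eqP k0 k1 k2 a01 a02 u12.
- have link u : (kind u == Clause) || (kind u == Link) -> adj u0 u -> kind u = Link.
    by case/orP=> /eqP // ku; rewrite adj_clause_clause.
  by split; [| apply: link k1 a01 | apply: link k2 a02].
- have cls u : (kind u == Clause) || (kind u == Link) -> adj u0 u -> kind u = Clause.
    by case/orP=> /eqP // ku; rewrite adj_link_link.
  have c1 := cls _ k1 a01; have c2 := cls _ k2 a02.
  by rewrite (link_neighbour_uniq k0 _ _ a01 a02) ?c1 ?c2 ?eqxx in u12.
Qed.

Lemma clique_sees_clause_cherry (l : 'I_5) u0 u1 u2 :
  kind u0 = Clause -> kind u1 = Link -> kind u2 = Link ->
  adj u0 u1 -> adj u0 u2 -> u1 != u2 ->
  [|| adj (inr l) u0, adj (inr l) u1 | adj (inr l) u2].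
Proof.
move=> k0 k1 k2 a01 a02 u12; case: (ltnP l 3) => [lt3 | ge3]; last by rewrite adj_clique_clause.
apply: contraR u12 => /norP [_ /norP [/negbTE n1 /negbTE n2]].
by rewrite (clause_link_nonadj_clique_uniq k0 k1 k2 a01 a02 lt3 n1 n2).
Qed.

Lemma clique_sees_lit_cherry (l : 'I_5) u0 u1 u2 : l != 3 :> nat ->
  kind u0 = Literal -> kind u1 = Link \/ kind u2 = Link ->
  [|| adj (inr l) u0, adj (inr l) u1 | adj (inr l) u2].
Proof.
move=> l_ne3 k0 k12; case: (ltnP l 3) => [lt3 | ge3]; first by rewrite adj_clique_lit.
have l4 : l = 4 :> nat by move: (ltn_ord l) l_ne3 ge3; case: (nat_of_ord l) => [|[|[|[|[|]]]]].
by case: k12 => /(adj_clique_link l4) ->; rewrite ?orbT.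
Qed.

End Graph.

Lemma P3P5_side i j : P3P5 i j -> (i < 3) = (j < 3).
Proof.
by case: i => [[|[|[|[|[|[|[|[|?]]]]]]]] ?] //;
  case: j => [[|[|[|[|[|[|[|[|?]]]]]]]] ?].
Qed.

Lemma P3P5_neighbour i : exists j, P3P5 i j.
Proof.
case: i => [[|[|[|[|[|[|[|[|?]]]]]]]] ?] //;
  by [exists (Ordinal (isT : 0 < 8)) | exists (Ordinal (isT : 1 < 8))
    | exists (Ordinal (isT : 3 < 8)) | exists (Ordinal (isT : 4 < 8))
    | exists (Ordinal (isT : 5 < 8)) | exists (Ordinal (isT : 6 < 8))].
Qed.

Lemma P3P5_far_cherry z : exists w0 w1 w2 : 'I_8,
  [/\ P3P5 w0 w1, P3P5 w0 w2, w1 != w2 & (w0 < 3) != (z < 3)].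
Proof.
case: (z < 3).
- by exists (Ordinal (isT : 4 < 8)), (Ordinal (isT : 3 < 8)), (Ordinal (isT : 5 < 8)).
- by exists (Ordinal (isT : 1 < 8)), (Ordinal (isT : 0 < 8)), (Ordinal (isT : 2 < 8)).
Qed.

Section InducedCopy.
Variables (n m : nat) (cl : 'I_m -> 'I_3 -> 'I_n) (f : 'I_8 -> vert n m).
Hypotheses (f_inj : injective f) (f_adj : forall i j, adjG' cl (f i) (f j) = P3P5 i j).
Local Notation adj := (adjG' cl).
Local Notation side i := (nat_of_ord i < 3).

Lemma copy_adj_sides i j : side i != side j -> adj (f i) (f j) = false.
Proof. by rewrite f_adj; apply: contraNF => /P3P5_side ->. Qed.

Lemma copy_cherry w0 w1 w2 : P3P5 w0 w1 -> P3P5 w0 w2 -> w1 != w2 ->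
  [/\ adj (f w0) (f w1), adj (f w0) (f w2) & f w1 != f w2].
Proof. by rewrite !f_adj (inj_eq f_inj) => -> -> ->. Qed.

Lemma copy_clique_same_side i j :
  kind (f i) = Clique -> kind (f j) = Clique -> side i = side j.
Proof.
move=> ki kj; have [// | sides] := eqVneq (side i) (side j).
have fij : f i != f j by apply: contraNneq sides => /f_inj ->.
by move: (copy_adj_sides sides); rewrite adj_clique_clique ?fij.
Qed.

Lemma copy_lit_or_clause_free :
  (forall i, kind (f i) != Literal) \/ (forall i, kind (f i) != Clause).
Proof.
case: (boolP [exists i, kind (f i) == Literal]) => [/existsP [i /eqP li] | /existsPn]; last by left.
right=> j; apply/eqP => cj.
have same : side i = side j by apply: P3P5_side; rewrite -f_adj adj_lit_clause.
have link w : side w != side i -> kind (f w) = Link.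
  by move=> sw; apply: nonadj_lit_clause_link li cj _ _; apply: copy_adj_sides; rewrite -?same.
have [w0 [w1 [w2 [e01 _ _ far]]]] := P3P5_far_cherry i.
by move: (e01); rewrite -f_adj adj_link_link ?link // -(P3P5_side e01).
Qed.

Lemma copy_cherry_no_literal w0 w1 w2 : (forall i, kind (f i) != Literal) ->
  (forall i, side i = side w0 -> kind (f i) != Clique) ->
  P3P5 w0 w1 -> P3P5 w0 w2 -> w1 != w2 ->
  [/\ kind (f w0) = Clause, kind (f w1) = Link & kind (f w2) = Link].
Proof.
move=> noL noK e01 e02 w12; have [a01 a02 f12] := copy_cherry e01 e02 w12.
have kinds i : side i = side w0 -> kind (f i) \in [:: Clause; Link].
  by move/noK; move: (noL i); case: (kind _).
apply: cherry_no_literal a01 a02 f12; apply: kinds;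
  by rewrite -?(P3P5_side e01) -?(P3P5_side e02).
Qed.

Lemma copy_cherry_no_clause w0 w1 w2 : (forall i, kind (f i) != Clause) ->
  (forall i, side i = side w0 -> kind (f i) != Clique) ->
  P3P5 w0 w1 -> P3P5 w0 w2 -> w1 != w2 ->
  kind (f w0) = Literal /\ (kind (f w1) = Link \/ kind (f w2) = Link).
Proof.
move=> noC noK e01 e02 w12; have [a01 a02 f12] := copy_cherry e01 e02 w12.
have kinds i : side i = side w0 -> kind (f i) \in [:: Literal; Link].
  by move/noK; move: (noC i); case: (kind _).
apply: cherry_no_clause a01 a02 f12; apply: kinds;
  by rewrite -?(P3P5_side e01) -?(P3P5_side e02).
Qed.

Lemma copy_has_clique : exists z, kind (f z) = Clique.
Proof.
case: (boolP [exists z, kind (f z) == Clique]) => [/existsP [z /eqP] | /existsPn noK];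
  first by exists z.
have noK_side (w0 i : 'I_8) : side i = side w0 -> kind (f i) != Clique by [].
pose v k (lt_k8 : k < 8) : 'I_8 := Ordinal lt_k8.
case: copy_lit_or_clause_free => [noL | noC].
- have centre w0 w1 w2 := @copy_cherry_no_literal w0 w1 w2 noL (noK_side w0).
  have [c4 _ _] := centre (v 4 isT) (v 3 isT) (v 5 isT) isT isT isT.
  have [c5 _ _] := centre (v 5 isT) (v 4 isT) (v 6 isT) isT isT isT.
  by move: (f_adj (v 4 isT) (v 5 isT)); rewrite adj_clause_clause.
- have centre w0 w1 w2 := @copy_cherry_no_clause w0 w1 w2 noC (noK_side w0).
  have [l4 _] := centre (v 4 isT) (v 3 isT) (v 5 isT) isT isT isT.
  have [l6 _] := centre (v 6 isT) (v 5 isT) (v 7 isT) isT isT isT.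
  have [_ [k4 | k6]] := centre (v 5 isT) (v 4 isT) (v 6 isT) isT isT isT.
  + by rewrite k4 in l4.
  + by rewrite k6 in l6.
Qed.

(* [inr l] is k_(l+1), so k_4 is [inr 3]. *)
Lemma copy_clique_not_k4 : (forall i, kind (f i) != Clause) ->
  exists z (l : 'I_5), f z = inr l /\ l != 3 :> nat.
Proof.
move=> noC; have [z] := copy_has_clique.
case fz: (f z) => [[[? | ?] | ?] | l] // _.
have [l3 | l_ne3] := eqVneq (nat_of_ord l) 3; last by exists z, l.
have [j e] := P3P5_neighbour z.
have azj : adj (inr l) (f j) by rewrite -fz f_adj.
have := clique3_neighbour l3 azj; rewrite !inE (negbTE (noC j)) /=.
case fj: (f j) azj => [[[? | ?] | ?] | l'] //= l_ne_l' _.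
exists j, l'; split=> //; apply: contraNneq l_ne_l' => l'3.
by apply/eqP/val_inj; rewrite /= l3 l'3.
Qed.

Lemma copy_far_cherry z : kind (f z) = Clique -> exists w0 w1 w2,
  [/\ P3P5 w0 w1, P3P5 w0 w2, w1 != w2,
      forall i, side i = side w0 -> kind (f i) != Clique &
      ~~ [|| adj (f z) (f w0), adj (f z) (f w1) | adj (f z) (f w2)]].
Proof.
move=> kz; have [w0 [w1 [w2 [e01 e02 w12 far]]]] := P3P5_far_cherry z.
have far_adj i : side i = side w0 -> adj (f z) (f i) = false.
  by move=> si; apply: copy_adj_sides; rewrite si eq_sym.
exists w0, w1, w2; split=> //.
- move=> i si; apply/eqP => ki.
  by rewrite -si (copy_clique_same_side ki kz) eqxx in far.
- by rewrite !far_adj // -?(P3P5_side e01) -?(P3P5_side e02).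
Qed.

Lemma copy_not_literal_free : ~ (forall i, kind (f i) != Literal).
Proof.
move=> noL; have [z kz] := copy_has_clique.
have [w0 [w1 [w2 [e01 e02 w12 noK far]]]] := copy_far_cherry kz.
have [c0 l1 l2] := copy_cherry_no_literal noL noK e01 e02 w12.
have [a01 a02 f12] := copy_cherry e01 e02 w12.
case: (f z) kz far => [[[? | ?] | ?] | l] // _.
by rewrite (clique_sees_clause_cherry l c0 l1 l2 a01 a02 f12).
Qed.

Lemma copy_not_clause_free : ~ (forall i, kind (f i) != Clause).
Proof.
move=> noC; have [z [l [fz l_ne3]]] := copy_clique_not_k4 noC.
have kz : kind (f z) = Clique by rewrite fz.
have [w0 [w1 [w2 [e01 e02 w12 noK far]]]] := copy_far_cherry kz.
have [l0 link12] := copy_cherry_no_clause noC noK e01 e02 w12.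
by rewrite fz (clique_sees_lit_cherry cl l_ne3 l0 link12) in far.
Qed.

End InducedCopy.

Theorem lemma3 (n m : nat) (cl : 'I_m -> 'I_3 -> 'I_n)
  (Hcl : forall j, injective (cl j))
  (Hdist : forall j j', j != j' -> [set cl j k | k : 'I_3] != [set cl j' k | k : 'I_3]) :
  induced_free (@adjG' n m cl) P3P5.
Proof.
move=> [f [f_inj f_adj]].
case: (copy_lit_or_clause_free f_adj).
- exact: copy_not_literal_free f_inj f_adj.
- exact: copy_not_clause_free f_inj f_adj.
Qed.
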